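(* Let $\pi\in[0,1)$, $\epsilon\in\left(0,\tfrac12\right]$, $g>0$, $\underline{\gamma}\in[0,1]$, let $q:[0,1]\to\mathbb{R}$ be Lebesgue integrable, and let $r(x)=\min\{\int_\rho q(z)\,\mathrm{d}z:\rho\subseteq[0,1]\text{ Lebesgue measurable},\ \lambda(\rho)=x\}$ for $x\in[0,1]$ (so $r(0)=0$). Let $$\Gamma^\star=\left\{h\in[0,1]:\ \frac{(1-\pi)(1-\epsilon)-\pi\epsilon g}{(1-\pi)\epsilon}\,h\ \ge\ r(\underline{\gamma}h)\right\}.$$ Suppose the principal's policy $\gamma^\star:[0,1]\to\{0,\underline{\gamma}\}$ punishes at rate $\underline{\gamma}$ exactly in the states where this is credible, i.e. $\gamma^\star(h)=\underline{\gamma}$ if $h\in\Gamma^\star$ and $\gamma^\star(h)=0$ otherwise. Then $\gamma^\star$ is a threshold rule: there exists $\tilde h\in[0,1]$ such that $\gamma^\star(h)=\underline{\gamma}$ for all $h\in[0,\tilde h)$, $\gamma^\star(h)=0$ for all $h\in(\tilde h,1]$, and $\gamma^\star(\tilde h)\in\{0,\underline{\gamma}\}$, where $\gamma^\star(\tilde h)=\underline{\gamma}$ is possible only if $\tilde h$ satisfies the defining inequality of $\Gamma^\star$.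
   Context: In the principal–agent model of technology adoption, $h\in[0,1]$ is the measure of agents with access to a new technology (good with probability $\pi$, yielding $1+g$ if good and $0$ if bad when used), $\epsilon$ is the error probability of the agents' research signal, $\underline{\gamma}$ is the minimal rate of firing failed agents that induces research effort, $q(z)$ is the cost of replacement worker $z$, and $r(x)$ the least cost of replacing a measure $x$ of workers. $\Gamma^\star$ is the set of states in which the principal finds it worthwhile (under commitment) to punish failures at rate $\underline{\gamma}$; the principal only ever uses punishment rates $0$ or $\underline{\gamma}$. *)

From HB Require Import structures.
From mathcomp Require Import all_boot all_order all_algebra.
From mathcomp Require Import all_classical all_reals all_analysis.
Set Implicit Arguments. Unset Strict Implicit. Unset Printing Implicit Defensive.
Import Order.TTheory GRing.Theory Num.Theory.
Local Open Scope classical_set_scope.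
Local Open Scope ring_scope.

Definition unit_itv (R : realType) : set R := [set x | 0 <= x <= 1].

(* r(x) = min { int_rho q : rho measurable, rho ⊆ [0,1], lambda(rho) = x }.
   Written as the infimum of that set (the minimum is attained by the
   bathtub principle, so inf = min). *)
Definition rcost (R : realType) (q : R -> R) (x : R) : R :=
  inf [set y : R | exists rho : set R,
        [/\ measurable rho, rho `<=` @unit_itv R,
            (lebesgue_measure : measure (measurableTypeR R) R) rho = x%:E &
            y = Rintegral (lebesgue_measure : measure (measurableTypeR R) R) rho q]].

Definition Gamma_star (R : realType) (pi eps g gam : R) (q : R -> R) : set R :=
  [set h : R | 0 <= h <= 1 /\
     ((1 - pi) * (1 - eps) - pi * eps * g) / ((1 - pi) * eps) * h
       >= rcost q (gam * h)].

From HB Require Import structures.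
From mathcomp Require Import all_boot all_order all_algebra.
From mathcomp Require Import all_classical all_reals all_analysis.
From mathcomp Require Import ring lra.
Import Order.TTheory GRing.Theory Num.Theory.
Import numFieldNormedType.Exports.
Set Implicit Arguments.
Unset Strict Implicit.
Unset Printing Implicit Defensive.
Local Open Scope classical_set_scope.
Local Open Scope ring_scope.

(* Gamma* is a down-closed subset of [0,1] containing 0, so its supremum is
   the threshold.  Down-closedness comes from the star-shapedness
   r(t x) <= t r(x) for t in [0,1]: if h < s and s is in Gamma*, then
   c h = (h/s) c s >= (h/s) r(gam s) >= r(gam h).  For star-shapedness, cut a
   set rho of measure x at a level c of q so that the part of rho where
   q < c + eta has measure exactly t x and q >= c on the rest (Lebesgue
   measure takes every intermediate value on subsets of rho, since
   s |-> lambda(rho /\ ]-oo, s]) is 1-Lipschitz).  Averaging then bounds the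
   cost of the lower part by t * int_rho q + eta. *)

Section unit_itv_measure.
Variable R : realType.
Local Notation mu := (lebesgue_measure : measure (measurableTypeR R) R).
Local Notation U := (@unit_itv R).

Lemma unit_itvE : U = `[0, 1]%classic.
Proof. by apply/seteqP; split => x /=; rewrite in_itv. Qed.

Lemma measurable_unit_itv : measurable U.
Proof. by rewrite unit_itvE; exact: measurable_itv. Qed.

Lemma lebesgue_measure_unit_itv : mu U = 1%:E.
Proof.
by rewrite unit_itvE; have := @lebesgue_measure_itv R `[0, 1]; rewrite /= lte_fin ltr01 sube0.
Qed.

Lemma lebesgue_measure_itv_oc (s t : R) : s <= t -> mu `]s, t]%classic = (t - s)%:E.
Proof.
rewrite le_eqVlt => /predU1P[<-|st]; first by rewrite set_itvoc0 measure0 subrr.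
by have := @lebesgue_measure_itv R `]s, t]; rewrite /= lte_fin st -EFinD.
Qed.

Section subset.
Variables (A : set R) (mA : measurable A) (AU : A `<=` U).

Lemma measure_sub_unit_itv_le1 : (mu A <= 1%:E)%E.
Proof.
rewrite -lebesgue_measure_unit_itv; apply: le_measure => //; rewrite inE //.
exact: measurable_unit_itv.
Qed.

Lemma fin_num_measure_sub_unit_itv : mu A \is a fin_num.
Proof.
by rewrite ge0_fin_numE // (le_lt_trans measure_sub_unit_itv_le1) // ltey.
Qed.

Lemma fine_measure_sub_unit_itv : 0 <= fine (mu A) <= 1.
Proof.
by rewrite fine_ge0 //= -lee_fin fineK ?measure_sub_unit_itv_le1 ?fin_num_measure_sub_unit_itv.
Qed.

Lemma integrable_cst_sub_unit_itv (k : R) : mu.-integrable A (EFin \o cst k).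
Proof.
apply/integrableP; split; first exact/measurable_realfun.measurable_EFinP.
rewrite (_ : (fun x => `|(EFin \o cst k) x|)%E = cst `|k|%:E) //.
by rewrite integral_cst // -(fineK fin_num_measure_sub_unit_itv) -EFinM ltry.
Qed.

End subset.

Lemma fine_measureU_sub_unit_itv (A B : set R) : measurable A -> measurable B ->
  A `<=` U -> B `<=` U -> A `&` B = set0 ->
  fine (mu (A `|` B)) = fine (mu A) + fine (mu B).
Proof.
move=> mA mB AU BU AB; rewrite measureU // fineD //.
- exact: fin_num_measure_sub_unit_itv.
- exact: fin_num_measure_sub_unit_itv.
Qed.

Definition measure_below (E : set R) (s : R) : R :=
  fine (mu (E `&` `]-oo, s]%classic)).

Section measure_below.
Variables (E : set R) (mE : measurable E) (EU : E `<=` U).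

Let measurable_below s : measurable (E `&` `]-oo, s]%classic).
Proof. by apply: measurableI => //; exact: measurable_itv. Qed.

Let below_sub_unit_itv s : E `&` `]-oo, s]%classic `<=` U.
Proof. by move=> x [/EU]. Qed.

Lemma measure_below_le (s t : R) : s <= t ->
  measure_below E s <= measure_below E t <= measure_below E s + (t - s).
Proof.
move=> st; rewrite /measure_below -!lee_fin EFinD.
rewrite !fineK ?fin_num_measure_sub_unit_itv //; apply/andP; split.
  apply: le_measure; rewrite ?inE; try exact: measurable_below.
  by move=> x [Ex /=]; rewrite !in_itv /= => xs; split => //; lra.
rewrite -(lebesgue_measure_itv_oc st).
apply: le_trans (measureU2 mu (measurable_below s) (measurable_itv `]s, t])).
apply: le_measure; rewrite ?inE; try exact: measurable_below.
  by apply: measurableU; [exact: measurable_below | exact: measurable_itv].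
move=> x [Ex /=]; rewrite in_itv /= => xt.
have [xs|xs] := leP x s; [left | right]; first by split; rewrite //= in_itv /= xs.
by rewrite /= in_itv /= xs xt.
Qed.

Lemma continuous_measure_below : continuous (measure_below E).
Proof.
move=> x; apply/cvgrPdist_lt => e e0; apply/nbhs_ballP; exists e => // t.
rewrite /ball /= => hxt; apply: le_lt_trans hxt.
have [xt|tx] := leP x t.
  have /andP[h1 h2] := measure_below_le xt.
  rewrite [`|x - t|]distrC [`|t - x|]ger0_norm ?subr_ge0 // ler_norml.
  by apply/andP; split; lra.
have /andP[h1 h2] := measure_below_le (ltW tx).
rewrite [`|x - t|]ger0_norm ?subr_ge0 ?(ltW tx) // ler_norml.
by apply/andP; split; lra.
Qed.

Lemma measure_sub_ivt (y : R) : 0 <= y <= fine (mu E) ->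
  exists E' : set R, [/\ measurable E', E' `<=` E & mu E' = y%:E].
Proof.
move=> /andP[y0 yE].
have below_m1 : measure_below E (-1) = 0.
  rewrite /measure_below (_ : _ `&` _ = set0) ?measure0 //.
  apply/seteqP; split => // x [/EU /andP [x0 _]] /=; rewrite in_itv /=; lra.
have below_1 : measure_below E 1 = fine (mu E).
  by rewrite /measure_below setIidl // => x /EU /andP[_ x1] /=; rewrite in_itv /= x1.
have [s _ sy] : exists2 s, s \in `[-1, 1] & measure_below E s = y.
  apply: IVT; first lra.
    exact/continuous_subspaceT/continuous_measure_below.
  have E0 := le_trans y0 yE.
  by rewrite below_m1 below_1 (min_idPl E0) (max_idPr E0) y0 yE.
exists (E `&` `]-oo, s]%classic); split; first exact: measurable_below.
  exact: subIsetl.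
by rewrite -sy /measure_below fineK ?fin_num_measure_sub_unit_itv.
Qed.

End measure_below.
End unit_itv_measure.

Section integrable_on_unit_itv.
Variables (R : realType) (q : R -> R).
Local Notation mu := (lebesgue_measure : measure (measurableTypeR R) R).
Local Notation U := (@unit_itv R).
Hypothesis q_int : mu.-integrable U (EFin \o q).

Definition L1norm_unit_itv : R := Rintegral mu U (fun z => `|q z|).
Local Notation normq := L1norm_unit_itv.

Lemma integrable_sub_unit_itv (A : set R) :
  measurable A -> A `<=` U -> mu.-integrable A (EFin \o q).
Proof. by move=> mA AU; apply: integrableS q_int => //; exact: measurable_unit_itv. Qed.

Lemma measurable_setI_preimage (rho Y : set R) : measurable rho -> rho `<=` U ->
  measurable Y -> measurable (rho `&` q @^-1` Y).
Proof.
move=> mrho rhoU mY.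
have mq : measurable_fun U q.
  by apply/measurable_realfun.measurable_EFinP; exact: (measurable_int mu q_int).
rewrite (_ : rho `&` _ = rho `&` (U `&` q @^-1` Y)).
  by apply: measurableI => //; apply: mq => //; exact: measurable_unit_itv.
by apply/seteqP; split => z /= [rz qz]; split => //; [split => //; exact: rhoU | case: qz].
Qed.

Lemma Rintegral_setU_sub_unit_itv (A B : set R) : measurable A -> measurable B ->
  A `<=` U -> B `<=` U -> A `&` B = set0 ->
  Rintegral mu (A `|` B) q = Rintegral mu A q + Rintegral mu B q.
Proof.
move=> mA mB AU BU AB; apply: Rintegral_setU => //; last by rewrite disj_set2E AB.
by apply: integrable_sub_unit_itv; [exact: measurableU | move=> z [/AU|/BU]].
Qed.

Section bounds.
Variables (A : set R) (mA : measurable A) (AU : A `<=` U).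

Lemma Rintegral_le_cst (k : R) :
  (forall z, A z -> q z <= k) -> Rintegral mu A q <= k * fine (mu A).
Proof.
move=> qk; rewrite -Rintegral_cst //; apply: le_Rintegral => //.
- exact: integrable_sub_unit_itv.
- exact: integrable_cst_sub_unit_itv.
Qed.

Lemma Rintegral_ge_cst (k : R) :
  (forall z, A z -> k <= q z) -> k * fine (mu A) <= Rintegral mu A q.
Proof.
move=> kq; rewrite -Rintegral_cst //; apply: le_Rintegral => //.
- exact: integrable_cst_sub_unit_itv.
- exact: integrable_sub_unit_itv.
Qed.

Lemma Rintegral_norm_le_L1norm : Rintegral mu A (fun z => `|q z|) <= normq.
Proof.
have mUA : measurable (U `\` A) by apply: measurableD => //; exact: measurable_unit_itv.
rewrite /L1norm_unit_itv -[X in _ <= Rintegral _ X _](setDUK AU) Rintegral_setU //.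
- by rewrite lerDl Rintegral_ge0.
- by rewrite (setDUK AU); exact: integrable_norm q_int.
- by rewrite disj_set2E setDIK.
Qed.

Lemma Rintegral_ge_NL1norm : - normq <= Rintegral mu A q.
Proof.
rewrite lerNl; apply: le_trans Rintegral_norm_le_L1norm.
apply: le_trans (le_normr_Rintegral (mu := mu) mA (integrable_sub_unit_itv mA AU)).
by rewrite -normrN ler_norm.
Qed.

Lemma markov_L1norm (c : R) :
  (forall z, A z -> c <= `|q z|) -> c * fine (mu A) <= normq.
Proof.
move=> cq; apply: le_trans Rintegral_norm_le_L1norm.
rewrite -Rintegral_cst //; apply: le_Rintegral => //.
- exact: integrable_cst_sub_unit_itv.
- exact: integrable_norm (integrable_sub_unit_itv mA AU).
Qed.

End bounds.

Definition sublevel (rho : set R) (c : R) : set R := rho `&` q @^-1` `]-oo, c[%classic.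

Section lower_part.
Variables (rho : set R) (mrho : measurable rho) (rhoU : rho `<=` U).
Local Notation x := (fine (mu rho)).

Lemma measurable_sublevel c : measurable (sublevel rho c).
Proof. by apply: measurable_setI_preimage => //; exact: measurable_itv. Qed.

Lemma sublevel_sub_unit_itv c : sublevel rho c `<=` U.
Proof. by move=> z [/rhoU]. Qed.

Lemma measurable_superlevel c : measurable (rho `\` sublevel rho c).
Proof. by apply: measurableD => //; exact: measurable_sublevel. Qed.

Lemma fine_measure_level_split c :
  x = fine (mu (sublevel rho c)) + fine (mu (rho `\` sublevel rho c)).
Proof.
rewrite -fine_measureU_sub_unit_itv.
- by rewrite setDUK //; exact: subIsetl.
- exact: measurable_sublevel.
- exact: measurable_superlevel.
- exact: sublevel_sub_unit_itv.
- by move=> z [/rhoU].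
- exact: setDIK.
Qed.

Lemma sublevel_small y : 0 < y -> exists c, fine (mu (sublevel rho c)) <= y.
Proof.
move=> y0; have normq0 : 0 <= normq by exact: Rintegral_ge0.
have [K K0 Ky] : exists2 K, 0 < K & K * y = normq + y.
  exists (normq / y + 1); first by rewrite ltr_wpDl // divr_ge0 // ltW.
  by rewrite mulrDl mulfVK ?mul1r // gt_eqF.
exists (- K).
have /andP[a0 _] := fine_measure_sub_unit_itv (measurable_sublevel (- K))
  (@sublevel_sub_unit_itv (- K)).
have Ka : K * fine (mu (sublevel rho (- K))) <= normq.
  apply: markov_L1norm; first exact: measurable_sublevel.
    exact: sublevel_sub_unit_itv.
  move=> z [_ /=]; rewrite in_itv /= => qzK.
  by rewrite -normrN (le_trans _ (ler_norm _)) // lerNr ltW.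
nra.
Qed.

Lemma sublevel_bounded y c : y < x -> fine (mu (sublevel rho c)) <= y ->
  c <= normq / (x - y).
Proof.
move=> yx ay; have xy0 : 0 < x - y by rewrite subr_gt0.
have [c0|c0] := leP c 0.
  by apply: le_trans c0 _; rewrite divr_ge0 ?Rintegral_ge0 // ltW.
rewrite ler_pdivlMr //.
apply: le_trans (markov_L1norm (measurable_superlevel c) _ (c := c) _).
- by rewrite ler_pM2l // (fine_measure_level_split c); lra.
- by move=> z [/rhoU].
- move=> z [rz /= nqz]; apply: le_trans (ler_norm _).
  by rewrite leNgt; apply/negP => qzc; apply: nqz; split; rewrite //= in_itv.
Qed.

Lemma sublevel_le c d : c <= d -> sublevel rho c `<=` sublevel rho d.
Proof.
move=> cd z [rz /=]; rewrite in_itv /= => qzc.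
by split; rewrite //= in_itv /= (lt_le_trans qzc).
Qed.

(* Take c within eta of the sup of the levels whose sublevel set has measure
   at most y; the slab c <= q < c + eta then supplies the missing measure. *)
Lemma lower_part_exists y eta : 0 < y < x -> 0 < eta ->
  exists c (rho' : set R), [/\ measurable rho', rho' `<=` rho, mu rho' = y%:E,
    forall z, rho' z -> q z <= c + eta & forall z, rho z -> ~ rho' z -> c <= q z].
Proof.
move=> /andP[y0 yx] eta0.
pose C := [set c | fine (mu (sublevel rho c)) <= y].
have supC : has_sup C.
  split; first by have [c ?] := sublevel_small y0; exists c.
  by exists (normq / (x - y)) => c; exact: sublevel_bounded.
have [c Cc supc] := sup_adherent eta0 supC.
have yce : y < fine (mu (sublevel rho (c + eta))).
  rewrite ltNge; apply/negP => /(sup_upper_bound supC); lra.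
pose B := sublevel rho (c + eta) `\` sublevel rho c.
have mB : measurable B by apply: measurableD; exact: measurable_sublevel.
have BU : B `<=` U by move=> z [[/rhoU]].
have slab : fine (mu (sublevel rho (c + eta))) = fine (mu (sublevel rho c)) + fine (mu B).
  rewrite -fine_measureU_sub_unit_itv.
  - by rewrite setDUK //; apply: sublevel_le; rewrite lerDl ltW.
  - exact: measurable_sublevel.
  - exact: mB.
  - exact: sublevel_sub_unit_itv.
  - exact: BU.
  - exact: setDIK.
have [|E [mE EB muE]] := measure_sub_ivt mB BU (y := y - fine (mu (sublevel rho c))).
  by rewrite subr_ge0 Cc /=; lra.
have subE : sublevel rho c `&` E = set0.
  by apply/seteqP; split => z // [zc /EB[_ /(_ zc)]].
exists c, (sublevel rho c `|` E); split.
- by apply: measurableU => //; exact: measurable_sublevel.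
- by move=> z [[]|/EB[[]]].
- rewrite -(fineK (fin_num_measure_sub_unit_itv _ _)).
  + rewrite fine_measureU_sub_unit_itv ?muE //=; first by congr EFin; lra.
    * exact: measurable_sublevel.
    * exact: sublevel_sub_unit_itv.
    * by move=> z /EB /BU.
  + by apply: measurableU => //; exact: measurable_sublevel.
  + by move=> z [/sublevel_sub_unit_itv | /EB /BU].
- move=> z [|/EB[]] [_ /=]; rewrite in_itv /= => /ltW // qzc.
  by apply: le_trans qzc _; rewrite lerDl ltW.
- move=> z rz nz; rewrite leNgt; apply/negP => qzc.
  by apply: nz; left; split; rewrite //= in_itv.
Qed.

(* int_rho' q - t int_rho q = (1 - t) int_rho' q - t int_(rho - rho') q
   <= (1 - t) (c + eta) t x - t c (1 - t) x = t (1 - t) x eta <= eta. *)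
Lemma Rintegral_lower_part_le (rho' : set R) c eta t :
  measurable rho' -> rho' `<=` rho -> 0 <= t <= 1 -> fine (mu rho') = t * x ->
  0 <= eta -> (forall z, rho' z -> q z <= c + eta) ->
  (forall z, rho z -> ~ rho' z -> c <= q z) ->
  Rintegral mu rho' q <= t * Rintegral mu rho q + eta.
Proof.
move=> mrho' rho'rho /andP[t0 t1] murho' eta0 low high.
pose D := rho `\` rho'.
have mD : measurable D by exact: measurableD.
have rho'U : rho' `<=` U by move=> z /rho'rho /rhoU.
have DU : D `<=` U by move=> z [/rhoU].
have [rho'D rho'D0] : rho' `|` D = rho /\ rho' `&` D = set0 by rewrite setDUK // setDIK.
have muD : fine (mu D) = x - t * x.
  by have := fine_measureU_sub_unit_itv mrho' mD rho'U DU rho'D0; rewrite rho'D murho'; lra.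
have I' : Rintegral mu rho' q <= (c + eta) * (t * x).
  by rewrite -murho'; exact: Rintegral_le_cst.
have ID : c * (x - t * x) <= Rintegral mu D q.
  by rewrite -muD; apply: Rintegral_ge_cst => // z [rz nz]; exact: high.
have x01 := fine_measure_sub_unit_itv mrho rhoU.
rewrite -rho'D Rintegral_setU_sub_unit_itv //.
have h1 : 0 <= (1 - t) * ((c + eta) * (t * x) - Rintegral mu rho' q).
  by apply: mulr_ge0; lra.
have h2 : 0 <= t * (Rintegral mu D q - c * (x - t * x)) by apply: mulr_ge0; lra.
have h3 : 0 <= eta * (1 - (1 - t) * (t * x)).
  by rewrite mulr_ge0 // subr_ge0 !mulr_ile1 ?mulr_ge0 //; lra.
nra.
Qed.

Lemma lower_fraction_exists t eta : 0 < x -> 0 < t < 1 -> 0 < eta ->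
  exists rho' : set R, [/\ measurable rho', rho' `<=` U,
    mu rho' = (t * x)%:E & Rintegral mu rho' q <= t * Rintegral mu rho q + eta].
Proof.
move=> x0 /andP[t0 t1] eta0.
have [|c [rho' [mrho' rho'rho murho' low high]]] := lower_part_exists (y := t * x) _ eta0.
  by rewrite mulr_gt0 //= gtr_pMl.
exists rho'; split => //; first by move=> z /rho'rho /rhoU.
apply: (Rintegral_lower_part_le mrho' rho'rho _ _ (ltW eta0) low high).
- by rewrite !ltW.
- by rewrite murho'.
Qed.

End lower_part.

Lemma rcost_le (rho : set R) y : measurable rho -> rho `<=` U -> mu rho = y%:E ->
  rcost q y <= Rintegral mu rho q.
Proof.
move=> mrho rhoU murho; apply: ge_inf; last by exists rho.
by exists (- normq) => _ [A [mA AU _ ->]]; exact: Rintegral_ge_NL1norm.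
Qed.

Lemma rcost0_le0 : rcost q 0 <= 0.
Proof.
by have := rcost_le measurable0 (sub0set U) (measure0 mu); rewrite Rintegral_set0.
Qed.

Lemma rcost_scale_le y t : 0 <= y <= 1 -> 0 <= t <= 1 ->
  rcost q (t * y) <= t * rcost q y.
Proof.
move=> /andP[y0 y1] /andP[t0 t1]; have r0 := rcost0_le0.
move: t0; rewrite le_eqVlt => /predU1P[<-|t0]; first by rewrite !mul0r.
move: t1; rewrite le_eqVlt => /predU1P[->|t1]; first by rewrite !mul1r.
move: y0; rewrite le_eqVlt => /predU1P[<-|y0]; first by rewrite mulr0; nra.
apply/ler_addgt0Pr => e e0.
suff : (rcost q (t * y) - e) / t <= rcost q y by rewrite ler_pdivrMr // => h; nra.
apply: lb_le_inf.
  have [|E [mE EU muE]] := measure_sub_ivt (@measurable_unit_itv R) (@subset_refl _ U) (y := y).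
    by rewrite lebesgue_measure_unit_itv /= y1 ltW.
  by exists (Rintegral mu E q), E.
move=> _ [rho [mrho rhoU murho ->]].
have [||rho' [mrho' rho'U murho' cost']] := lower_fraction_exists mrho rhoU (t := t) _ _ e0.
- by rewrite murho.
- by rewrite t0 t1.
rewrite murho /= in murho'.
by have := rcost_le mrho' rho'U murho'; rewrite ler_pdivrMr //; lra.
Qed.

End integrable_on_unit_itv.

Lemma Gamma_star_down (R : realType) (pi eps g gam : R) (q : R -> R) (h s : R) :
  (lebesgue_measure : measure (measurableTypeR R) R).-integrable (@unit_itv R) (EFin \o q) ->
  0 <= gam <= 1 -> Gamma_star pi eps g gam q s -> 0 <= h <= s ->
  Gamma_star pi eps g gam q h.
Proof.
move=> q_int /andP[gam0 gam1] Gs /andP[h0]; rewrite le_eqVlt => /predU1P[->//|hs].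
case: Gs => /andP[s0 s1] Gs.
set c0 := _ / _ in Gs *.
have s_gt0 : 0 < s by exact: le_lt_trans hs.
split; first by rewrite h0 (le_trans (ltW hs)).
have t01 : 0 <= h / s <= 1 by rewrite divr_ge0 //= ler_pdivrMr // mul1r ltW.
have gs01 : 0 <= gam * s <= 1 by rewrite mulr_ge0 //= mulr_ile1.
have := rcost_scale_le q_int gs01 t01.
rewrite (_ : h / s * (gam * s) = gam * h); last by field; rewrite gt_eqF.
move=> /le_trans; apply.
rewrite (_ : c0 * h = h / s * (c0 * s)); last by field; rewrite gt_eqF.
by rewrite ler_wpM2l //; case/andP: t01.
Qed.

Lemma down_closed_sup (R : realType) (S : set R) :
  S `<=` @unit_itv R -> S 0 -> (forall s h, S s -> 0 <= h <= s -> S h) ->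
  [/\ 0 <= sup S <= 1, forall h, 0 <= h < sup S -> S h & forall h, sup S < h -> ~ S h].
Proof.
move=> SU S0 Sdown.
have supS : has_sup S by split; [exists 0 | exists 1 => h /SU /andP[]].
split.
- rewrite sup_upper_bound //=.
  by apply: ge_sup; [exists 0 | move=> h /SU /andP[]].
- move=> h /andP[h0 hs].
  have [|s Ss ss] := sup_adherent _ supS (eps := sup S - h); first by rewrite subr_gt0.
  by apply: Sdown Ss _; rewrite h0 /=; lra.
- by move=> h Sh /(sup_upper_bound supS); rewrite leNgt Sh.
Qed.

Theorem proposition1 (R : realType) (pi eps g gam : R) (q : R -> R)
  (gstar : R -> R)
  (hpi : 0 <= pi < 1) (heps : 0 < eps <= 2^-1) (hg : 0 < g)
  (hgam : 0 <= gam <= 1)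
  (hq : (lebesgue_measure : measure (measurableTypeR R) R).-integrable (@unit_itv R) (EFin \o q))
  (hstar_in : forall h, 0 <= h <= 1 -> Gamma_star pi eps g gam q h ->
                gstar h = gam)
  (hstar_out : forall h, 0 <= h <= 1 -> ~ Gamma_star pi eps g gam q h ->
                gstar h = 0) :
  exists ht : R, [/\ 0 <= ht <= 1,
    (forall h, 0 <= h < ht -> gstar h = gam),
    (forall h, ht < h <= 1 -> gstar h = 0),
    (gstar ht = 0 \/ gstar ht = gam) &
    (gstar ht = gam -> Gamma_star pi eps g gam q ht)].
Proof.
set S := Gamma_star pi eps g gam q.
have S0 : S 0 by split; [rewrite lexx ler01 | rewrite !mulr0; exact: rcost0_le0].
have gstar_dichotomy h : 0 <= h <= 1 -> gstar h = 0 \/ gstar h = gam.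
  by move=> h01; have [/hstar_in|/hstar_out] := pselect (S h); auto.
(* If gam = 0 then gstar (sup S) = gam even when sup S is not in S, so the
   threshold must be 0, which is in S. *)
have [gam0|gam_neq0] := eqVneq gam 0.
  exists 0; split => //; first by rewrite lexx ler01.
  - by move=> h /andP[h0 h0']; have := le_lt_trans h0 h0'; rewrite ltxx.
  - by move=> h /andP[/ltW h0 h1]; have [|->|->] := gstar_dichotomy h; rewrite ?h0 ?h1.
  - by apply: gstar_dichotomy; rewrite lexx ler01.
have SU : S `<=` @unit_itv R by move=> h [].
have [sup01 below above] :=
  down_closed_sup SU S0 (fun s h Ss hs => Gamma_star_down hq hgam Ss hs).
have /andP[sup0 sup1] := sup01.
exists (sup S); split => //.
- move=> h /andP[h0 hs]; apply: hstar_in (below h _); last by rewrite h0.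
  by rewrite h0 (le_trans (ltW hs)).
- move=> h /andP[hs h1]; apply: hstar_out (above h hs).
  by rewrite h1 (le_trans sup0 (ltW hs)).
- exact: gstar_dichotomy.
- move=> gsup; have [//|nS] := pselect (S (sup S)).
  by move: gam_neq0; rewrite -gsup hstar_out ?eqxx.
Qed.
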